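(* Let $\mathcal{C}$ be a d-category and $\mathrm{Rat}(\mathcal{C})$ the class of rational $\mathcal{C}$-languages. Then $(\mathrm{Rat}(\mathcal{C}),+,\emptyset,*,(-)^+)$ is a non-unital Kleene algebra: $\mathrm{Rat}(\mathcal{C})$ contains $\emptyset$ and is closed under $+$, $*$ and $(-)^+$; $+$ is associative, commutative, idempotent with unit $\emptyset$; $*$ is associative, distributes over $+$ on both sides, and $\emptyset$ is absorbing for $*$; and for all $L,M\in\mathrm{Rat}(\mathcal{C})$: $L+L^+*L^+\subseteq L^+$, and $L+M*M\subseteq M$ implies $L^+\subseteq M$.
   Context: A d-category is a small category $\mathcal{C}$ with wide subcategories $\mathcal{C}^+$ (formorphisms) and $\mathcal{C}^-$ (backmorphisms) such that an invertible $\varphi$ is in $\mathcal{C}^+$ iff $\varphi^{-1}\in\mathcal{C}^-$. A $\mathcal{C}$-automaton is a presheaf $X:\mathcal{C}^{op}\to\mathbf{Set}$ with sets of start and accept elements; morphisms preserve them. Simple automata have exactly one start and one accept element, lying over $\mathrm{src}(X),\mathrm{tgt}(X)$; for simple $X,Y$ with $\mathrm{tgt}X=\mathrm{src}Y=U$, $X*Y$ is the pushout of $X\leftarrow\mathcal{C}(-,U)\to Y$ (along accept of $X$, start of $Y$) with start from $X$ and accept from $Y$. A linear category is a bipointed d-category isomorphic to a finite (possibly empty) concatenation (gluing $\top$ to $\bot$) of $\mathbf S$ (formorphism $\bot\to\top$), $\mathbf T$ (backmorphism $\top\to\bot$), $\mathbf I$ (inverse pair); a path is a d-functor $\omega:\mathcal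 I\to\mathcal{C}$ from one; its track object is $\operatorname{colim}_i\mathcal{C}(-,\omega(i))$ with start element image of $\mathrm{id}_{\omega(\bot)}$, accept element image of $\mathrm{id}_{\omega(\top)}$; track objects are automata isomorphic to such. $\Delta\sqsubseteq\Gamma$ if there is an automaton morphism $\Delta\to\Gamma$. A $\mathcal{C}$-language is a class of track objects down-closed under $\sqsubseteq$; $A{\downarrow}$ is down-closure. $\iota_U$: $\mathcal{C}(-,U)$ with start and accept $\mathrm{id}_U$; $1_{\mathcal{C}}=\{\iota_U\}{\downarrow}$. Operations: $L+M=L\cup M$; $L*M=\{\Gamma*\Delta\mid\Gamma\in L,\Delta\in M,\mathrm{tgt}\Gamma=\mathrm{src}\Delta\}{\downarrow}$; $L^0=1_{\mathcal{C}}$, $L^{k+1}=L*L^k$, $L^+=\bigcup_{n\ge1}L^n$. Atomic languages are $\{\Gamma\}{\downarrow}$ for a track object $\Gamma$; $\mathrm{Rat}(\mathcal{C})$ is the smallest class of languages containing $\emptyset$ and all atomic languages and closed under $+$, $*$, $(-)^+$. *)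

From Stdlib Require Import List Arith.

Record cat := Cat {
  Ob : Type;
  Hom : Ob -> Ob -> Type;
  idm : forall a, Hom a a;
  comp : forall a b c, Hom b c -> Hom a b -> Hom a c;   (* comp g f = g o f *)
  comp_id_l : forall a b (f : Hom a b), comp a b b (idm b) f = f;
  comp_id_r : forall a b (f : Hom a b), comp a a b f (idm a) = f;
  comp_assoc : forall a b c d (f : Hom a b) (g : Hom b c) (h : Hom c d),
      comp a c d h (comp a b c g f) = comp a b d (comp b c d h g) f }.
Arguments Hom {_} _ _.
Arguments idm {_} _.
Arguments comp {_ a b _} _ _.

Record dcat := DCat {
  dc :> cat;
  isF : forall a b : Ob dc, Hom a b -> Prop;
  isB : forall a b : Ob dc, Hom a b -> Prop;
  isF_id : forall a : Ob dc, isF a a (idm a);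
  isF_comp : forall (a b c : Ob dc) (f : Hom a b) (g : Hom b c),
      isF a b f -> isF b c g -> isF a c (comp g f);
  isB_id : forall a : Ob dc, isB a a (idm a);
  isB_comp : forall (a b c : Ob dc) (f : Hom a b) (g : Hom b c),
      isB a b f -> isB b c g -> isB a c (comp g f);
  isF_inv_isB : forall (a b : Ob dc) (f : Hom a b) (g : Hom b a),
      comp g f = idm a -> comp f g = idm b -> (isF a b f <-> isB b a g) }.
Arguments isF {d a b} _.
Arguments isB {d a b} _.

Record presheaf (C : cat) := Presheaf {
  pob :> Ob C -> Type;
  pact : forall U V : Ob C, Hom U V -> pob V -> pob U;
  pact_id : forall U (x : pob U), pact U U (idm U) x = x;
  pact_comp : forall U V W (f : Hom U V) (g : Hom V W) (x : pob W),
      pact U W (comp g f) x = pact U V f (pact V W g x) }.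
Arguments pact {C} p {U V} _ _.

Definition repr (C : cat) (c : Ob C) : presheaf C :=
  @Presheaf C (fun U => Hom U c) (fun U V f g => comp g f)
    (fun U x => comp_id_r C U c x)
    (fun U V W f g x => comp_assoc C U V W c f g x).

Record nattrans (C : cat) (X Y : presheaf C) := NatTrans {
  nt :> forall U, X U -> Y U;
  nt_nat : forall U V (f : Hom U V) (x : X V),
      nt U (pact X f x) = pact Y f (nt V x) }.
Arguments nattrans {C} _ _.
Arguments nt {C X Y} _ _ _.

Record automaton (C : cat) := Automaton {
  apsh :> presheaf C;
  astart : {U : Ob C & apsh U} -> Prop;
  aacc : {U : Ob C & apsh U} -> Prop }.
Arguments astart {C} _ _.
Arguments apsh {C} _.
Arguments aacc {C} _ _.

Record autmor (C : cat) (X Y : automaton C) := AutMor {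
  am :> nattrans X Y;
  am_start : forall U (x : X U),
      astart X (existT _ U x) -> astart Y (existT _ U (am U x));
  am_acc : forall U (x : X U),
      aacc X (existT _ U x) -> aacc Y (existT _ U (am U x)) }.

Arguments autmor {C} _ _.

Definition sqsub (C : cat) (X Y : automaton C) : Prop := inhabited (autmor X Y).

Definition simple (C : cat) (X : automaton C) : Prop :=
  (exists s, forall e, astart X e <-> e = s) /\
  (exists a, forall e, aacc X e <-> e = a).

Arguments sqsub {C} _ _.
Arguments simple {C} _.

Definition iota_aut (C : cat) (U : Ob C) : automaton C :=
  @Automaton C (repr C U)
    (fun e => e = existT (fun V => repr C U V) U (idm U))
    (fun e => e = existT (fun V => repr C U V) U (idm U)).

Arguments iota_aut {C} _.

(* A linear category is (up to isomorphism) a concatenation of letters: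
   S (formorphism bot -> top), T (backmorphism top -> bot),
   I (inverse pair; the arrow bot -> top is a formorphism and its inverse a
   backmorphism).  For a word w of length n the concatenation has objects
   0..n and is thin: there is a (unique) morphism i -> j iff
   i <= j and all steps in [i,j) are S or I, or j <= i and all steps in
   [j,i) are T or I.  Its formorphisms are the morphisms i -> j with
   i <= j, its backmorphisms those with j <= i. *)
Inductive letter := LS | LT | LI.

Definition fwd (l : letter) : Prop := l = LS \/ l = LI.
Definition bwd (l : letter) : Prop := l = LT \/ l = LI.

Definition reach (w : list letter) (i j : nat) : Prop :=
  i <= length w /\ j <= length w /\
  (i <= j -> forall k, i <= k < j -> fwd (nth k w LI)) /\
  (j <= i -> forall k, j <= k < i -> bwd (nth k w LI)).

(* A path: a d-functor from the linear category of the word pw to C. *)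
Record path (C : dcat) := Path {
  pw : list letter;
  po : nat -> Ob C;                      (* relevant for 0 <= i <= length pw *)
  ph : forall i j, reach pw i j -> Hom (po i) (po j);
  ph_id : forall i (r : reach pw i i), ph i i r = idm (po i);
  ph_comp : forall i j k (r1 : reach pw i j) (r2 : reach pw j k)
      (r3 : reach pw i k), ph i k r3 = comp (ph j k r2) (ph i j r1);
  ph_F : forall i j (r : reach pw i j), i <= j -> isF (ph i j r);
  ph_B : forall i j (r : reach pw i j), j <= i -> isB (ph i j r) }.
Arguments pw {C} _.
Arguments po {C} _ _.
Arguments ph {C} _ {i j} _.

Definition plen {C : dcat} (p : path C) : nat := length (pw p).

Definition is_track_colimit {C : dcat} (p : path C) (X : presheaf C)
    (iota : forall i, nattrans (repr C (po p i)) X) : Prop :=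
  (forall i j (r : reach (pw p) i j) U (g : Hom U (po p i)),
      iota j U (comp (ph p r) g) = iota i U g) /\
  (forall (W : presheaf C) (tau : forall i, nattrans (repr C (po p i)) W),
     (forall i j (r : reach (pw p) i j) U (g : Hom U (po p i)),
        tau j U (comp (ph p r) g) = tau i U g) ->
     (exists u : nattrans X W, forall i, i <= plen p ->
         forall U (g : Hom U (po p i)), u U (iota i U g) = tau i U g) /\
     (forall u1 u2 : nattrans X W,
        (forall i, i <= plen p -> forall U (g : Hom U (po p i)),
            u1 U (iota i U g) = tau i U g) ->
        (forall i, i <= plen p -> forall U (g : Hom U (po p i)),
            u2 U (iota i U g) = tau i U g) ->
        forall U x, u1 U x = u2 U x)).

(* track objects: automata isomorphic to the track object of a path,
   i.e. a colimit as above with start element iota_0(id) and accept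
   element iota_n(id). *)
Definition is_track {C : dcat} (X : automaton C) : Prop :=
  exists (p : path C) (iota : forall i, nattrans (repr C (po p i)) X),
    is_track_colimit p X iota /\
    (forall e, astart X e <->
        e = existT _ (po p 0) (iota 0 (po p 0) (idm (po p 0)))) /\
    (forall e, aacc X e <->
        e = existT _ (po p (plen p))
              (iota (plen p) (po p (plen p)) (idm (po p (plen p))))).

(* Z is (a choice of) X * Y: X, Y simple, the accept element a of X and
   the start element b of Y lie over the same object U, and Z is a pushout
   of X <- C(-,U) -> Y (the maps being the Yoneda maps of a and b), with
   start elements the image of those of X and accept elements the image of
   those of Y. *)
Definition is_concat {C : dcat} (X Y Z : automaton C) : Prop :=
  simple X /\ simple Y /\
  exists (U : Ob C) (a : X U) (b : Y U),
    aacc X (existT _ U a) /\ astart Y (existT _ U b) /\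
    exists (p : nattrans X Z) (q : nattrans Y Z),
      (forall V (g : Hom V U), p V (pact X g a) = q V (pact Y g b)) /\
      (forall (W : presheaf C) (p' : nattrans X W) (q' : nattrans Y W),
         (forall V (g : Hom V U), p' V (pact X g a) = q' V (pact Y g b)) ->
         (exists u : nattrans Z W,
             (forall V x, u V (p V x) = p' V x) /\
             (forall V y, u V (q V y) = q' V y)) /\
         (forall u1 u2 : nattrans Z W,
             (forall V x, u1 V (p V x) = p' V x) ->
             (forall V y, u1 V (q V y) = q' V y) ->
             (forall V x, u2 V (p V x) = p' V x) ->
             (forall V y, u2 V (q V y) = q' V y) ->
             forall V z, u1 V z = u2 V z)) /\
      (forall e, astart Z e <->
          exists V x, astart X (existT _ V x) /\ e = existT _ V (p V x)) /\
      (forall e, aacc Z e <->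
          exists V y, aacc Y (existT _ V y) /\ e = existT _ V (q V y)).

Definition lang (C : dcat) := automaton C -> Prop.

Definition is_language {C : dcat} (L : lang C) : Prop :=
  (forall X, L X -> is_track X) /\
  (forall X Y, is_track X -> sqsub X Y -> L Y -> L X).

Definition down {C : dcat} (A : automaton C -> Prop) : lang C :=
  fun D => is_track D /\ exists G, A G /\ sqsub D G.

Definition lempty (C : dcat) : lang C := fun _ => False.
Definition lplus {C : dcat} (L M : lang C) : lang C := fun X => L X \/ M X.
Definition lmul {C : dcat} (L M : lang C) : lang C :=
  down (fun Z => exists G D, L G /\ M D /\ is_concat G D Z).
Definition lone (C : dcat) : lang C :=
  down (fun Z => exists U : Ob C, Z = iota_aut U).
Fixpoint lpow {C : dcat} (L : lang C) (n : nat) : lang C :=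
  match n with
  | 0 => lone C
  | S k => lmul L (lpow L k)
  end.
Definition lplusstar {C : dcat} (L : lang C) : lang C :=
  fun X => exists n, 1 <= n /\ lpow L n X.
Definition latom {C : dcat} (G : automaton C) : lang C :=
  down (fun Z => Z = G).

Definition lsub {C : dcat} (L M : lang C) : Prop := forall X, L X -> M X.
Definition leqv {C : dcat} (L M : lang C) : Prop := forall X, L X <-> M X.

(* Rat(C): smallest class of languages containing the empty language and
   the atomic languages, closed under +, *, (-)^+ (classes of languages
   being extensional, it is closed under equality of languages). *)
Inductive Rat {C : dcat} : lang C -> Prop :=
| Rat_empty : Rat (@lempty C)
| Rat_atom : forall G, is_track G -> Rat (latom G)
| Rat_plus : forall L M, Rat L -> Rat M -> Rat (lplus L M)
| Rat_mul : forall L M, Rat L -> Rat M -> Rat (lmul L M)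
| Rat_plusstar : forall L, Rat L -> Rat (lplusstar L)
| Rat_ext : forall L M, Rat L -> leqv L M -> Rat M.

From Stdlib Require Import List Arith Lia.
From Stdlib Require Import ProofIrrelevance FunctionalExtensionality PropExtensionality.
From Stdlib Require Import ClassicalEpsilon Eqdep.

(* Rational languages are languages (down-closed classes of track objects), so
   the laws of [+] and the absorption by the empty language are set theory.  The
   content lies in the product, i.e. in gluing simple automata along a pushout:
   gluing is monotone for [⊑]; by the universal property of pushouts the two
   bracketings of a triple gluing are [⊑] each other; gluing with [iota_U]
   returns the automaton up to [⊑]; and gluing the track objects of two paths
   gives the track object of the concatenated path.  Hence [*] is associative
   with [1] as right unit on languages, so [L^n * L^m ⊆ L^(n+m)], which yields
   [L+ * L+ ⊆ L+]; the induction axiom follows from [L^(n+1) = L * L^n]. *)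

Definition nt_id {C : cat} (X : presheaf C) : nattrans X X :=
  NatTrans C X X (fun U x => x) (fun U V f x => eq_refl).

Definition nt_comp {C : cat} {X Y W : presheaf C} (u : nattrans Y W) (t : nattrans X Y) :
  nattrans X W.
Proof.
  refine (NatTrans C X W (fun U x => u U (t U x)) _).
  intros; rewrite !nt_nat; reflexivity.
Defined.

Definition nt_precomp {C : cat} {A B : Ob C} {W : presheaf C} (m : Hom B A)
  (t : nattrans (repr C A) W) : nattrans (repr C B) W.
Proof.
  refine (NatTrans C (repr C B) W (fun V g => t V (comp m g)) _).
  intros U V f g; simpl. rewrite <- (nt_nat C _ _ t); simpl. rewrite comp_assoc. reflexivity.
Defined.

Definition yoneda {C : cat} {X : presheaf C} {A : Ob C} (x : X A) : nattrans (repr C A) X.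
Proof.
  refine (NatTrans C (repr C A) X (fun V g => pact X g x) _).
  intros U V f g; simpl. apply pact_comp.
Defined.

Lemma yoneda_act {C : cat} {A : Ob C} {X : presheaf C} (t : nattrans (repr C A) X)
  {V W : Ob C} (f : Hom V W) (g : Hom W A) :
  pact X f (t W g) = t V (comp g f).
Proof. rewrite <- nt_nat. reflexivity. Qed.

Definition cast_hom {C : cat} {A B : Ob C} (e : A = B) : Hom A B :=
  match e in _ = B' return Hom A B' with eq_refl => idm A end.

Lemma cast_hom_refl {C : cat} {A : Ob C} (e : A = A) : cast_hom e = idm A.
Proof. rewrite (proof_irrelevance _ e eq_refl); reflexivity. Qed.

Lemma cast_hom_trans {C : cat} {A B D : Ob C} (e1 : A = B) (e2 : B = D) :
  comp (cast_hom e2) (cast_hom e1) = cast_hom (eq_trans e1 e2).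
Proof. destruct e2, e1; simpl. apply comp_id_l. Qed.

Lemma cast_hom_trans_comp {C : cat} {A B D E : Ob C} (e1 : A = B) (e2 : B = D) (x : Hom E A) :
  comp (cast_hom e2) (comp (cast_hom e1) x) = comp (cast_hom (eq_trans e1 e2)) x.
Proof. rewrite comp_assoc, cast_hom_trans. reflexivity. Qed.

Lemma isF_cast_hom {C : dcat} {A B : Ob C} (e : A = B) : isF (cast_hom e).
Proof. destruct e. apply isF_id. Qed.

Lemma isB_cast_hom {C : dcat} {A B : Ob C} (e : A = B) : isB (cast_hom e).
Proof. destruct e. apply isB_id. Qed.

Lemma existT_cast {C : cat} (Z : presheaf C) {A B : Ob C} (x : Z A) (y : Z B) :
  existT (fun V => Z V) A x = existT (fun V => Z V) B y ->
  exists e : A = B, x = pact Z (cast_hom e) y.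
Proof.
  intro H. pose proof (f_equal (@projT1 _ _) H) as e; simpl in e; subst B.
  apply inj_pair2 in H. exists eq_refl; simpl. rewrite pact_id. exact H.
Qed.

Lemma existT_yoneda {C : cat} (Z : presheaf C) {A B : Ob C} (F : nattrans (repr C A) Z)
  (e : B = A) :
  existT (fun V => Z V) B (F B (comp (cast_hom e) (idm B))) =
  existT (fun V => Z V) A (F A (idm A)).
Proof. destruct e; simpl. rewrite comp_id_l. reflexivity. Qed.

Ltac invert_existT h := let e := fresh "e" in
  pose proof (f_equal (@projT1 _ _) h) as e; simpl in e; subst; apply inj_pair2 in h; subst.

Definition am_id {C : cat} (X : automaton C) : autmor X X :=
  AutMor C X X (nt_id X) (fun U x h => h) (fun U x h => h).

Definition am_comp {C : cat} {X Y Z : automaton C} (g : autmor Y Z) (f : autmor X Y) :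
  autmor X Z.
Proof.
  refine (AutMor C X Z (nt_comp g f) _ _); intros U x h; simpl.
  - apply (am_start C Y Z g), (am_start C X Y f), h.
  - apply (am_acc C Y Z g), (am_acc C X Y f), h.
Defined.

Lemma sqsub_refl {C : cat} (X : automaton C) : sqsub X X.
Proof. constructor. apply am_id. Qed.

Lemma sqsub_trans {C : cat} (X Y Z : automaton C) : sqsub X Y -> sqsub Y Z -> sqsub X Z.
Proof. intros [f] [g]. constructor. exact (am_comp g f). Qed.

Lemma down_is_language {C : dcat} (A : automaton C -> Prop) : is_language (down A).
Proof.
  split.
  - intros X [h _]; exact h.
  - intros X Y hX hXY [_ [G [hG hYG]]]. split; [exact hX|].
    exists G; split; [exact hG|eapply sqsub_trans; eauto].
Qed.

Lemma is_language_ext {C : dcat} (L M : lang C) : is_language L -> leqv L M -> is_language M.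
Proof.
  intros [h1 h2] e. split.
  - intros X hX; apply h1, e, hX.
  - intros X Y hX hXY hY. apply e. eapply h2; eauto. apply e; exact hY.
Qed.

Lemma lpow_is_language {C : dcat} (L : lang C) n : is_language (lpow L n).
Proof. destruct n; apply down_is_language. Qed.

Lemma Rat_is_language {C : dcat} (L : lang C) : Rat L -> is_language L.
Proof.
  induction 1.
  - split; intros; contradiction.
  - apply down_is_language.
  - destruct IHRat1 as [a1 a2], IHRat2 as [b1 b2]. split.
    + intros X [h|h]; eauto.
    + intros X Y hX hXY [h|h]; [left|right]; eauto.
  - apply down_is_language.
  - split.
    + intros X [n [_ h]]. exact (proj1 (lpow_is_language L n) X h).
    + intros X Y hX hXY [n [hn h]]. exists n; split; [exact hn|].
      exact (proj2 (lpow_is_language L n) X Y hX hXY h).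
  - eapply is_language_ext; eauto.
Qed.

Lemma lmul_mono {C : dcat} (L L' M M' : lang C) :
  lsub L L' -> lsub M M' -> lsub (lmul L M) (lmul L' M').
Proof.
  intros h1 h2 X [hX [Z [[G [D [hG [hD hc]]]] hXZ]]].
  split; [exact hX|]. exists Z; split; [|exact hXZ].
  exists G, D; auto.
Qed.

Definition coglue {C : cat} {X Y W : presheaf C} {U : Ob C} (a : X U) (b : Y U)
  (p : nattrans X W) (q : nattrans Y W) : Prop :=
  forall V (g : Hom V U), p V (pact X g a) = q V (pact Y g b).

Definition pushout_univ {C : cat} {X Y Z : presheaf C} {U : Ob C} (a : X U) (b : Y U)
  (P : nattrans X Z) (Q : nattrans Y Z) : Prop :=
  forall (W : presheaf C) (p : nattrans X W) (q : nattrans Y W), coglue a b p q ->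
    (exists u : nattrans Z W,
        (forall V x, u V (P V x) = p V x) /\ (forall V y, u V (Q V y) = q V y)) /\
    (forall u1 u2 : nattrans Z W,
        (forall V x, u1 V (P V x) = p V x) -> (forall V y, u1 V (Q V y) = q V y) ->
        (forall V x, u2 V (P V x) = p V x) -> (forall V y, u2 V (Q V y) = q V y) ->
        forall V z, u1 V z = u2 V z).

Definition sum_act {C : cat} (X Y : presheaf C) {U V : Ob C} (f : Hom U V)
  (s : (X V + Y V)%type) : (X U + Y U)%type :=
  match s with inl x => inl (pact X f x) | inr y => inr (pact Y f y) end.

(* The pushout of [X <- C(-,U) -> Y] is computed objectwise as the quotient of
   [X V + Y V] by the equivalence relation generated by [a.g ~ b.g]. *)
Inductive glue_rel {C : cat} {X Y : presheaf C} {U : Ob C} (a : X U) (b : Y U) (V : Ob C)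
  : (X V + Y V)%type -> (X V + Y V)%type -> Prop :=
| glue_base : forall g : Hom V U, glue_rel a b V (inl (pact X g a)) (inr (pact Y g b))
| glue_refl : forall s, glue_rel a b V s s
| glue_sym : forall s t, glue_rel a b V s t -> glue_rel a b V t s
| glue_trans : forall s t w, glue_rel a b V s t -> glue_rel a b V t w -> glue_rel a b V s w.

Lemma glue_rel_act {C : cat} {X Y : presheaf C} {U : Ob C} (a : X U) (b : Y U) V V'
  (f : Hom V' V) s t : glue_rel a b V s t -> glue_rel a b V' (sum_act X Y f s) (sum_act X Y f t).
Proof.
  induction 1; simpl.
  - rewrite <- !pact_comp. apply glue_base.
  - apply glue_refl.
  - apply glue_sym; auto.
  - eapply glue_trans; eauto.
Qed.

Definition glue_class {C : cat} {X Y : presheaf C} {U : Ob C} (a : X U) (b : Y U) (V : Ob C) :=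
  {c : (X V + Y V)%type -> Prop | exists s, c = glue_rel a b V s}.

Definition glue_cls {C : cat} {X Y : presheaf C} {U : Ob C} (a : X U) (b : Y U) V s :
  glue_class a b V := exist _ (glue_rel a b V s) (ex_intro _ s eq_refl).

Lemma glue_class_eq {C : cat} {X Y : presheaf C} {U : Ob C} (a : X U) (b : Y U) V
  (c1 c2 : glue_class a b V) : proj1_sig c1 = proj1_sig c2 -> c1 = c2.
Proof. destruct c1, c2; simpl; intros ->; f_equal; apply proof_irrelevance. Qed.

Lemma glue_class_surj {C : cat} {X Y : presheaf C} {U : Ob C} (a : X U) (b : Y U) V
  (c : glue_class a b V) : exists s, c = glue_cls a b V s.
Proof. destruct c as [c [s e]]. exists s. apply glue_class_eq. exact e. Qed.

Lemma glue_act_eq {C : cat} {X Y : presheaf C} {U : Ob C} (a : X U) (b : Y U) V V'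
  (f : Hom V' V) s :
  (fun t => exists s', glue_rel a b V s s' /\ glue_rel a b V' (sum_act X Y f s') t) =
  glue_rel a b V' (sum_act X Y f s).
Proof.
  apply functional_extensionality; intro t. apply propositional_extensionality. split.
  - intros [s' [h1 h2]]. eapply glue_trans; [|exact h2]. apply glue_rel_act; exact h1.
  - intro h. exists s; split; [apply glue_refl|exact h].
Qed.

Definition glue_act {C : cat} {X Y : presheaf C} {U : Ob C} (a : X U) (b : Y U) V V'
  (f : Hom V' V) (c : glue_class a b V) : glue_class a b V'.
Proof.
  refine (exist _ (fun t => exists s, proj1_sig c s /\ glue_rel a b V' (sum_act X Y f s) t) _).
  destruct c as [c [s0 ->]]. exists (sum_act X Y f s0). apply glue_act_eq.
Defined.

Lemma glue_act_cls {C : cat} {X Y : presheaf C} {U : Ob C} (a : X U) (b : Y U) V V'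
  (f : Hom V' V) s : glue_act a b V V' f (glue_cls a b V s) = glue_cls a b V' (sum_act X Y f s).
Proof. apply glue_class_eq; simpl. apply glue_act_eq. Qed.

Definition glue_psh {C : cat} {X Y : presheaf C} {U : Ob C} (a : X U) (b : Y U) : presheaf C.
Proof.
  refine (Presheaf C (glue_class a b) (fun V' V f c => glue_act a b V V' f c) _ _).
  - intros V c. destruct (glue_class_surj a b V c) as [s ->]. rewrite glue_act_cls.
    f_equal. destruct s; simpl; rewrite pact_id; reflexivity.
  - intros U1 V W f g c. destruct (glue_class_surj a b W c) as [s ->]. rewrite !glue_act_cls.
    f_equal. destruct s; simpl; rewrite pact_comp; reflexivity.
Defined.

Definition glue_inl {C : cat} {X Y : presheaf C} {U : Ob C} (a : X U) (b : Y U) :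
  nattrans X (glue_psh a b).
Proof.
  refine (NatTrans C X (glue_psh a b) (fun V x => glue_cls a b V (inl x)) _).
  intros V V' f x; simpl. rewrite glue_act_cls. reflexivity.
Defined.

Definition glue_inr {C : cat} {X Y : presheaf C} {U : Ob C} (a : X U) (b : Y U) :
  nattrans Y (glue_psh a b).
Proof.
  refine (NatTrans C Y (glue_psh a b) (fun V y => glue_cls a b V (inr y)) _).
  intros V V' f y; simpl. rewrite glue_act_cls. reflexivity.
Defined.

Lemma glue_coglue {C : cat} {X Y : presheaf C} {U : Ob C} (a : X U) (b : Y U) :
  coglue a b (glue_inl a b) (glue_inr a b).
Proof.
  intros V g. apply glue_class_eq; simpl. apply functional_extensionality; intro t.
  apply propositional_extensionality. split; intro h.
  - eapply glue_trans; [|exact h]. apply glue_sym, glue_base.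
  - eapply glue_trans; [|exact h]. apply glue_base.
Qed.

Lemma glue_pushout_univ {C : cat} {X Y : presheaf C} {U : Ob C} (a : X U) (b : Y U) :
  pushout_univ a b (glue_inl a b) (glue_inr a b).
Proof.
  intros W p q hpq.
  set (h := fun V (s : (X V + Y V)%type) => match s with inl x => p V x | inr y => q V y end).
  assert (h_resp : forall V s t, glue_rel a b V s t -> h V s = h V t).
  { induction 1; simpl; auto. congruence. }
  assert (h_nat : forall V V' (f : Hom V' V) s, h V' (sum_act X Y f s) = pact W f (h V s)).
  { intros; destruct s; simpl; apply nt_nat. }
  split.
  - (* [h] respects [glue_rel], so it may be evaluated on any chosen representative *)
    set (rep := fun V (c : glue_class a b V) =>
                  proj1_sig (constructive_indefinite_description _ (proj2_sig c))).
    assert (h_rep : forall V s, h V (rep V (glue_cls a b V s)) = h V s).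
    { intros V s. unfold rep.
      destruct (constructive_indefinite_description _ (proj2_sig (glue_cls a b V s))) as [s' e].
      simpl in *. symmetry. apply h_resp. rewrite e. apply glue_refl. }
    unshelve eexists (NatTrans C (glue_psh a b) W (fun V c => h V (rep V c)) _).
    + intros V' V f c; simpl. destruct (glue_class_surj a b V c) as [s ->].
      rewrite glue_act_cls, !h_rep. apply h_nat.
    + split; intros; simpl; rewrite h_rep; reflexivity.
  - intros u1 u2 h1 h2 h3 h4 V z. destruct (glue_class_surj a b V z) as [[x|y] ->].
    + change (glue_cls a b V (inl x)) with (glue_inl a b V x). rewrite h1, h3. reflexivity.
    + change (glue_cls a b V (inr y)) with (glue_inr a b V y). rewrite h2, h4. reflexivity.
Qed.

Definition glue_aut {C : cat} (X Y : automaton C) {U : Ob C} (a : X U) (b : Y U) :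
  automaton C :=
  Automaton C (glue_psh a b)
    (fun e => exists V x, astart X (existT _ V x) /\ e = existT _ V (glue_inl a b V x))
    (fun e => exists V y, aacc Y (existT _ V y) /\ e = existT _ V (glue_inr a b V y)).

Lemma concat_exists {C : dcat} (X Y : automaton C) (U : Ob C) (a : X U) (b : Y U) :
  simple X -> simple Y -> aacc X (existT _ U a) -> astart Y (existT _ U b) ->
  exists Z, is_concat X Y Z.
Proof.
  intros sX sY ha hb. exists (glue_aut X Y a b).
  split; [exact sX|]. split; [exact sY|].
  exists U, a, b. split; [exact ha|]. split; [exact hb|].
  exists (glue_inl a b), (glue_inr a b).
  split; [apply glue_coglue|]. split; [apply glue_pushout_univ|].
  split; intro e; simpl; tauto.
Qed.

Lemma simple_start_unique {C : cat} (X : automaton C) e1 e2 :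
  simple X -> astart X e1 -> astart X e2 -> e1 = e2.
Proof. intros [[s hs] _] h1 h2. apply hs in h1; apply hs in h2; congruence. Qed.

Lemma simple_acc_unique {C : cat} (X : automaton C) e1 e2 :
  simple X -> aacc X e1 -> aacc X e2 -> e1 = e2.
Proof. intros [_ [s hs]] h1 h2. apply hs in h1; apply hs in h2; congruence. Qed.

Lemma track_simple {C : dcat} (X : automaton C) : is_track X -> simple X.
Proof. intros [p [iota [_ [hs ha]]]]. split; eexists; eauto. Qed.

Lemma iota_simple {C : cat} (U : Ob C) : simple (iota_aut U).
Proof. split; eexists; intro; simpl; reflexivity. Qed.

Lemma image_elt_inv {C : cat} {X Z : presheaf C} (P : nattrans X Z)
  (S : {V : Ob C & X V} -> Prop) V z :
  (exists V' x, S (existT _ V' x) /\ existT (fun V => Z V) V z = existT _ V' (P V' x)) ->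
  exists x, S (existT _ V x) /\ z = P V x.
Proof.
  intros [V' [x [h e]]]. pose proof (f_equal (@projT1 _ _) e) as e1; simpl in e1; subst V'.
  apply inj_pair2 in e. exists x; split; assumption.
Qed.

Lemma image_singleton {C : cat} {X Z : presheaf C} (P : nattrans X Z)
  (S : {V : Ob C & X V} -> Prop) :
  (exists s, forall e, S e <-> e = s) ->
  exists s, forall e,
    (exists V x, S (existT _ V x) /\ e = existT (fun V => Z V) V (P V x)) <-> e = s.
Proof.
  intros [[V0 x0] hs]. exists (existT _ V0 (P V0 x0)). intro e. split.
  - intros [V [x [h ->]]]. apply hs in h. invert_existT h. reflexivity.
  - intros ->. exists V0, x0. split; [apply hs|]; reflexivity.
Qed.

Lemma concat_simple {C : dcat} (X Y Z : automaton C) : is_concat X Y Z -> simple Z.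
Proof.
  intros [sX [sY [U [a [b [_ [_ [P [Q [_ [_ [hst hac]]]]]]]]]]]]. split.
  - destruct (image_singleton P _ (proj1 sX)) as [s hs]. exists s. intro e. rewrite hst. apply hs.
  - destruct (image_singleton Q _ (proj2 sY)) as [s hs]. exists s. intro e. rewrite hac. apply hs.
Qed.

Lemma concat_start {C : dcat} (X Y Z : automaton C) V x :
  is_concat X Y Z -> astart X (existT _ V x) -> exists z, astart Z (existT _ V z).
Proof.
  intros [_ [_ [U [a [b [_ [_ [P [Q [_ [_ [hst _]]]]]]]]]]]] h.
  exists (P V x). apply hst. exists V, x. auto.
Qed.

Lemma concat_acc {C : dcat} (X Y Z : automaton C) V y :
  is_concat X Y Z -> aacc Y (existT _ V y) -> exists z, aacc Z (existT _ V z).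
Proof.
  intros [_ [_ [U [a [b [_ [_ [P [Q [_ [_ [_ hac]]]]]]]]]]]] h.
  exists (Q V y). apply hac. exists V, y. auto.
Qed.

Lemma concat_start_inv {C : dcat} (X Y Z : automaton C) V z :
  is_concat X Y Z -> astart Z (existT _ V z) -> exists x, astart X (existT _ V x).
Proof.
  intros [_ [_ [U [a [b [_ [_ [P [Q [_ [_ [hst _]]]]]]]]]]]] h.
  apply hst, image_elt_inv in h. destruct h as [x [h _]]. eauto.
Qed.

Lemma concat_acc_inv {C : dcat} (X Y Z : automaton C) V z :
  is_concat X Y Z -> aacc Z (existT _ V z) -> exists y, aacc Y (existT _ V y).
Proof.
  intros [_ [_ [U [a [b [_ [_ [P [Q [_ [_ [_ hac]]]]]]]]]]]] h.
  apply hac, image_elt_inv in h. destruct h as [y [h _]]. eauto.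
Qed.

Lemma concat_glue_point {C : dcat} (X Y Z : automaton C) :
  is_concat X Y Z -> exists U a b, aacc X (existT _ U a) /\ astart Y (existT _ U b).
Proof. intros [_ [_ [U [a [b [ha [hb _]]]]]]]. eauto. Qed.

Lemma concat_iota_sqsub {C : dcat} (G D Z : automaton C) (U0 : Ob C) :
  is_concat G D Z -> sqsub D (iota_aut U0) -> sqsub Z G.
Proof.
  intros [sG [sD [U [a [b [ha [hb [P [Q [glue [univ [hst hac]]]]]]]]]]]] [m].
  pose proof (am_start C _ _ m U b hb) as hmb; simpl in hmb. invert_existT hmb.
  destruct (univ G (nt_id G) (nt_comp (yoneda a) m)) as [[u [hu1 hu2]] _].
  { intros V g; simpl. rewrite (nt_nat C _ _ m). cbn in hmb |- *. rewrite hmb; simpl.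
    rewrite comp_id_l. reflexivity. }
  constructor. refine (AutMor C Z G u _ _).
  - intros V z hz. apply hst, image_elt_inv in hz. destruct hz as [x [hx ->]].
    rewrite hu1. exact hx.
  - intros V z hz. apply hac, image_elt_inv in hz. destruct hz as [y [hy ->]].
    rewrite hu2; simpl. pose proof (am_acc C _ _ m V y hy) as h; simpl in h.
    invert_existT h. rewrite h, pact_id. exact ha.
Qed.

Lemma concat_sqsub {C : dcat} (G D Z G' D' Z' : automaton C) :
  is_concat G D Z -> is_concat G' D' Z' -> sqsub G G' -> sqsub D D' -> sqsub Z Z'.
Proof.
  intros [sG [sD [U [a [b [ha [hb [P [Q [glue [univ [hst hac]]]]]]]]]]]]
         [sG' [sD' [U' [a' [b' [ha' [hb' [P' [Q' [glue' [univ' [hst' hac']]]]]]]]]]]] [f] [g].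
  pose proof (simple_acc_unique _ _ _ sG' (am_acc C _ _ f U a ha) ha') as ea.
  pose proof (simple_start_unique _ _ _ sD' (am_start C _ _ g U b hb) hb') as eb.
  invert_existT ea. apply inj_pair2 in eb; subst b'.
  destruct (univ Z' (nt_comp P' f) (nt_comp Q' g)) as [[u [hu1 hu2]] _].
  { intros V h; simpl. rewrite (nt_nat C _ _ f), (nt_nat C _ _ g). apply glue'. }
  constructor. refine (AutMor C Z Z' u _ _).
  - intros V z hz. apply hst, image_elt_inv in hz. destruct hz as [x [hx ->]].
    rewrite hu1. apply hst'. exists V, (f V x). split; [apply (am_start C _ _ f), hx|reflexivity].
  - intros V z hz. apply hac, image_elt_inv in hz. destruct hz as [y [hy ->]].
    rewrite hu2. apply hac'. exists V, (g V y). split; [apply (am_acc C _ _ g), hy|reflexivity].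
Qed.

Lemma concat_assoc {C : dcat} (G H K W Z P Z' : automaton C) :
  is_concat G H W -> is_concat W K Z -> is_concat H K P -> is_concat G P Z' ->
  sqsub Z Z' /\ sqsub Z' Z.
Proof.
  intros [sG [sH [U1 [a1 [b1 [ha1 [hb1 [PW [QW [glW [unW [stW acW]]]]]]]]]]]]
         [sW [sK [U2 [a2 [b2 [ha2 [hb2 [PZ [QZ [glZ [unZ [stZ acZ]]]]]]]]]]]]
         [_ [_ [U3 [a3 [b3 [ha3 [hb3 [PP [QP [glP [unP [stP acP]]]]]]]]]]]]
         [_ [sP [U4 [a4 [b4 [ha4 [hb4 [PZ' [QZ' [glZ' [unZ' [stZ' acZ']]]]]]]]]]]].
  (* all four gluings take place along the unique start/accept elements of G, H, K *)
  pose proof (simple_acc_unique _ _ _ sG ha4 ha1) as e1. invert_existT e1.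
  pose proof (simple_start_unique _ _ _ sK hb3 hb2) as e2. invert_existT e2.
  apply stP, image_elt_inv in hb4. destruct hb4 as [x [hx ->]].
  pose proof (simple_start_unique _ _ _ sH hx hb1) as e3. apply inj_pair2 in e3. subst x.
  apply acW, image_elt_inv in ha2. destruct ha2 as [y [hy ->]].
  pose proof (simple_acc_unique _ _ _ sH hy ha3) as e4. apply inj_pair2 in e4. subst y.
  split.
  - destruct (unW Z' PZ' (nt_comp QZ' PP)) as [[pW [hpW1 hpW2]] _].
    { intros V g. rewrite glZ'; simpl. rewrite (nt_nat C _ _ PP). reflexivity. }
    destruct (unZ Z' pW (nt_comp QZ' QP)) as [[u [hu1 hu2]] _].
    { intros V g. rewrite <- (nt_nat C _ _ QW), hpW2; simpl. rewrite glP. reflexivity. }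
    constructor. refine (AutMor C Z Z' u _ _).
    + intros V z hz. apply stZ, image_elt_inv in hz. destruct hz as [w [hw ->]].
      apply stW, image_elt_inv in hw. destruct hw as [x0 [hx0 ->]].
      rewrite hu1, hpW1. apply stZ'. exists V, x0. auto.
    + intros V z hz. apply acZ, image_elt_inv in hz. destruct hz as [k [hk ->]].
      rewrite hu2; simpl. apply acZ'. exists V, (QP V k). split; [|reflexivity].
      apply acP. exists V, k. auto.
  - destruct (unP Z (nt_comp PZ QW) QZ) as [[v [hv1 hv2]] _].
    { intros V g; simpl. rewrite (nt_nat C _ _ QW). apply glZ. }
    destruct (unZ' Z (nt_comp PZ PW) v) as [[u [hu1 hu2]] _].
    { intros V g; simpl. rewrite <- (nt_nat C _ _ PP), hv1; simpl. rewrite glW. reflexivity. }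
    constructor. refine (AutMor C Z' Z u _ _).
    + intros V z hz. apply stZ', image_elt_inv in hz. destruct hz as [x0 [hx0 ->]].
      rewrite hu1; simpl. apply stZ. exists V, (PW V x0). split; [|reflexivity].
      apply stW. exists V, x0. auto.
    + intros V z hz. apply acZ', image_elt_inv in hz. destruct hz as [r [hr ->]].
      apply acP, image_elt_inv in hr. destruct hr as [k [hk ->]].
      rewrite hu2, hv2. apply acZ. exists V, k. auto.
Qed.

Lemma reach_trans w i j k : reach w i j -> reach w j k -> reach w i k.
Proof.
  intros [a1 [a2 [a3 a4]]] [b1 [b2 [b3 b4]]]. split; [exact a1|]. split; [exact b2|]. split.
  - intros hik t ht. destruct (le_lt_dec i j) as [hij|hij].
    + destruct (le_lt_dec k j) as [hkj|hkj]; [apply a3; lia|].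
      destruct (le_lt_dec j t); [apply b3|apply a3]; lia.
    + apply b3; lia.
  - intros hki t ht. destruct (le_lt_dec j i) as [hji|hji].
    + destruct (le_lt_dec j k) as [hjk|hjk]; [apply a4; lia|].
      destruct (le_lt_dec j t); [apply a4|apply b4]; lia.
    + apply b4; lia.
Qed.

Section ReachApp.
Variables w1 w2 : list letter.

Lemma reach_prefix i j : reach (w1 ++ w2) i j -> i <= length w1 -> j <= length w1 ->
  reach w1 i j.
Proof.
  intros [a1 [a2 [a3 a4]]] hi hj. split; [lia|]. split; [lia|]. split.
  - intros h t ht. rewrite <- (app_nth1 w1 w2) by lia. apply a3; lia.
  - intros h t ht. rewrite <- (app_nth1 w1 w2) by lia. apply a4; lia.
Qed.

Lemma reach_suffix i j : reach (w1 ++ w2) i j -> ~ i <= length w1 -> ~ j <= length w1 ->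
  reach w2 (i - length w1) (j - length w1).
Proof.
  intros [a1 [a2 [a3 a4]]] hi hj. rewrite length_app in a1, a2.
  split; [lia|]. split; [lia|]. split.
  - intros h t ht. replace t with (t + length w1 - length w1) by lia.
    rewrite <- app_nth2 by lia. apply a3; lia.
  - intros h t ht. replace t with (t + length w1 - length w1) by lia.
    rewrite <- app_nth2 by lia. apply a4; lia.
Qed.

Lemma reach_prefix_to_end i j : reach (w1 ++ w2) i j -> i <= length w1 -> ~ j <= length w1 ->
  reach w1 i (length w1).
Proof.
  intros [a1 [a2 [a3 a4]]] hi hj. split; [lia|]. split; [lia|]. split; [|lia].
  intros h t ht. rewrite <- (app_nth1 w1 w2) by lia. apply a3; lia.
Qed.

Lemma reach_suffix_from_start i j : reach (w1 ++ w2) i j -> i <= length w1 ->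
  ~ j <= length w1 -> reach w2 0 (j - length w1).
Proof.
  intros [a1 [a2 [a3 a4]]] hi hj. rewrite length_app in a1, a2.
  split; [lia|]. split; [lia|]. split; [|lia].
  intros h t ht. replace t with (t + length w1 - length w1) by lia.
  rewrite <- app_nth2 by lia. apply a3; lia.
Qed.

Lemma reach_suffix_to_start i j : reach (w1 ++ w2) i j -> ~ i <= length w1 ->
  j <= length w1 -> reach w2 (i - length w1) 0.
Proof.
  intros [a1 [a2 [a3 a4]]] hi hj. rewrite length_app in a1, a2.
  split; [lia|]. split; [lia|]. split; [lia|].
  intros h t ht. replace t with (t + length w1 - length w1) by lia.
  rewrite <- app_nth2 by lia. apply a4; lia.
Qed.

Lemma reach_prefix_from_end i j : reach (w1 ++ w2) i j -> ~ i <= length w1 ->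
  j <= length w1 -> reach w1 (length w1) j.
Proof.
  intros [a1 [a2 [a3 a4]]] hi hj. split; [lia|]. split; [lia|]. split; [lia|].
  intros h t ht. rewrite <- (app_nth1 w1 w2) by lia. apply a4; lia.
Qed.

Lemma reach_app_prefix i j : reach w1 i j -> reach (w1 ++ w2) i j.
Proof.
  intros [a1 [a2 [a3 a4]]].
  split; [rewrite length_app; lia|]. split; [rewrite length_app; lia|]. split.
  - intros h t ht. rewrite app_nth1 by lia. apply a3; lia.
  - intros h t ht. rewrite app_nth1 by lia. apply a4; lia.
Qed.

Lemma reach_app_suffix i j : reach w2 i j -> reach (w1 ++ w2) (i + length w1) (j + length w1).
Proof.
  intros [a1 [a2 [a3 a4]]].
  split; [rewrite length_app; lia|]. split; [rewrite length_app; lia|]. split.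
  - intros h t ht. rewrite app_nth2 by lia. apply a3; lia.
  - intros h t ht. rewrite app_nth2 by lia. apply a4; lia.
Qed.

End ReachApp.

Lemma ph_ph {C : dcat} (p : path C) i j k (r1 : reach (pw p) i j) (r2 : reach (pw p) j k) :
  comp (ph p r2) (ph p r1) = ph p (reach_trans _ _ _ _ r1 r2).
Proof. symmetry; apply ph_comp. Qed.

Lemma ph_ph_comp {C : dcat} (p : path C) i j k (r1 : reach (pw p) i j)
  (r2 : reach (pw p) j k) {E : Ob C} (x : Hom E (po p i)) :
  comp (ph p r2) (comp (ph p r1) x) = comp (ph p (reach_trans _ _ _ _ r1 r2)) x.
Proof. rewrite comp_assoc, ph_ph. reflexivity. Qed.

Lemma ph_reindex {C : dcat} (p : path C) i j i' j' (r : reach (pw p) i j)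
  (r' : reach (pw p) i' j') (ei : i = i') (ej : j = j') :
  ph p r = comp (cast_hom (f_equal (po p) (eq_sym ej)))
             (comp (ph p r') (cast_hom (f_equal (po p) ei))).
Proof. subst; simpl. rewrite comp_id_l, comp_id_r. f_equal. apply proof_irrelevance. Qed.

Ltac hom_norm :=
  repeat (rewrite <- ?comp_assoc, ?cast_hom_trans_comp, ?cast_hom_trans, ?cast_hom_refl,
            ?comp_id_l, ?comp_id_r, ?ph_ph_comp, ?ph_ph, ?ph_id).

Ltac congr_irrelevance := repeat (first [reflexivity | apply proof_irrelevance | f_equal]).

Section PathCat.
Variables (C : dcat) (p q : path C) (e : po p (plen p) = po q 0).

Definition path_cat_ob (i : nat) : Ob C :=
  if le_dec i (plen p) then po p i else po q (i - plen p).

Lemma path_cat_ob_l i (hi : i <= plen p) : path_cat_ob i = po p i.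
Proof. unfold path_cat_ob. destruct (le_dec i (plen p)); [reflexivity|lia]. Qed.

Lemma path_cat_ob_r i (hi : ~ i <= plen p) : path_cat_ob i = po q (i - plen p).
Proof. unfold path_cat_ob. destruct (le_dec i (plen p)); [lia|reflexivity]. Qed.

Lemma path_cat_ob_shift i : po q i = path_cat_ob (i + plen p).
Proof.
  unfold path_cat_ob. destruct (le_dec (i + plen p) (plen p)).
  - replace i with 0 by lia. symmetry; exact e.
  - f_equal. lia.
Qed.

Definition path_cat_hom i j (r : reach (pw p ++ pw q) i j) :
  Hom (path_cat_ob i) (path_cat_ob j) :=
  match le_dec i (plen p) with
  | left hi =>
    match le_dec j (plen p) with
    | left hj =>
      comp (cast_hom (eq_sym (path_cat_ob_l j hj)))
        (comp (ph p (reach_prefix _ _ _ _ r hi hj)) (cast_hom (path_cat_ob_l i hi)))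
    | right hj =>
      comp (cast_hom (eq_sym (path_cat_ob_r j hj)))
        (comp (ph q (reach_suffix_from_start _ _ _ _ r hi hj))
          (comp (cast_hom e)
            (comp (ph p (reach_prefix_to_end _ _ _ _ r hi hj))
              (cast_hom (path_cat_ob_l i hi)))))
    end
  | right hi =>
    match le_dec j (plen p) with
    | left hj =>
      comp (cast_hom (eq_sym (path_cat_ob_l j hj)))
        (comp (ph p (reach_prefix_from_end _ _ _ _ r hi hj))
          (comp (cast_hom (eq_sym e))
            (comp (ph q (reach_suffix_to_start _ _ _ _ r hi hj))
              (cast_hom (path_cat_ob_r i hi)))))
    | right hj =>
      comp (cast_hom (eq_sym (path_cat_ob_r j hj)))
        (comp (ph q (reach_suffix _ _ _ _ r hi hj)) (cast_hom (path_cat_ob_r i hi)))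
    end
  end.

Lemma path_cat_hom_id i (r : reach (pw p ++ pw q) i i) : path_cat_hom i i r = idm _.
Proof. unfold path_cat_hom. destruct (le_dec i (plen p)); hom_norm; reflexivity. Qed.

Lemma path_cat_hom_comp i j k (r1 : reach (pw p ++ pw q) i j)
  (r2 : reach (pw p ++ pw q) j k) (r3 : reach (pw p ++ pw q) i k) :
  path_cat_hom i k r3 = comp (path_cat_hom j k r2) (path_cat_hom i j r1).
Proof.
  unfold path_cat_hom.
  destruct (le_dec i (plen p)), (le_dec j (plen p)), (le_dec k (plen p));
    hom_norm; congr_irrelevance.
Qed.

Lemma path_cat_hom_F i j (r : reach (pw p ++ pw q) i j) : i <= j -> isF (path_cat_hom i j r).
Proof.
  intro hij. unfold path_cat_hom, plen in *.
  destruct (le_dec i (length (pw p))), (le_dec j (length (pw p)));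
    try lia; repeat apply isF_comp; try apply isF_cast_hom; apply ph_F; lia.
Qed.

Lemma path_cat_hom_B i j (r : reach (pw p ++ pw q) i j) : j <= i -> isB (path_cat_hom i j r).
Proof.
  intro hij. unfold path_cat_hom, plen in *.
  destruct (le_dec i (length (pw p))), (le_dec j (length (pw p)));
    try lia; repeat apply isB_comp; try apply isB_cast_hom; apply ph_B; lia.
Qed.

Definition path_cat : path C :=
  Path C (pw p ++ pw q) path_cat_ob path_cat_hom
    path_cat_hom_id path_cat_hom_comp path_cat_hom_F path_cat_hom_B.

Lemma plen_path_cat : plen path_cat = plen p + plen q.
Proof. apply length_app. Qed.

End PathCat.

Lemma nt_family_reindex {C : cat} (o : nat -> Ob C) (W : presheaf C)
  (F : forall i, nattrans (repr C (o i)) W) i i' (e : i' = i) V x :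
  F i' V x = F i V (comp (cast_hom (f_equal o e)) x).
Proof. subst; simpl. rewrite comp_id_l. reflexivity. Qed.

Lemma nt_family_existT {C : cat} (o : nat -> Ob C) (W : presheaf C)
  (F : forall i, nattrans (repr C (o i)) W) i i' (e : i' = i) :
  existT (fun V => W V) (o i') (F i' (o i') (idm _)) =
  existT (fun V => W V) (o i) (F i (o i) (idm _)).
Proof. subst. reflexivity. Qed.

Definition path_cocone {C : dcat} (p : path C) {W : presheaf C}
  (tau : forall i, nattrans (repr C (po p i)) W) : Prop :=
  forall i j (r : reach (pw p) i j) U (g : Hom U (po p i)), tau j U (comp (ph p r) g) = tau i U g.

Lemma track_colimit_ext {C : dcat} (p : path C) (X : presheaf C) iota :
  is_track_colimit p X iota ->
  forall W (u1 u2 : nattrans X W),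
  (forall i, i <= plen p -> forall U g, u1 U (iota i U g) = u2 U (iota i U g)) ->
  forall U x, u1 U x = u2 U x.
Proof.
  intros [hc hu] W u1 u2 h.
  destruct (hu W (fun i => nt_comp u1 (iota i))) as [_ hu2].
  { intros i j r U g; simpl. rewrite hc. reflexivity. }
  apply hu2; [reflexivity|]. intros i hi U g; simpl. symmetry. apply h, hi.
Qed.

Definition psh_sum {C : cat} (X Y : presheaf C) : presheaf C.
Proof.
  refine (Presheaf C (fun V => (X V + Y V)%type) (fun U V f s => sum_act X Y f s) _ _).
  - intros U [x|y]; simpl; rewrite pact_id; reflexivity.
  - intros U V W f g [x|y]; simpl; rewrite pact_comp; reflexivity.
Defined.

Definition psh_sum_inl {C : cat} (X Y : presheaf C) : nattrans X (psh_sum X Y) :=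
  NatTrans C X (psh_sum X Y) (fun V x => inl x) (fun U V f x => eq_refl).

Definition psh_sum_inr {C : cat} (X Y : presheaf C) : nattrans Y (psh_sum X Y) :=
  NatTrans C Y (psh_sum X Y) (fun V y => inr y) (fun U V f x => eq_refl).

Definition psh_bool (C : cat) : presheaf C :=
  Presheaf C (fun _ => bool) (fun _ _ _ b => b) (fun _ _ => eq_refl)
    (fun _ _ _ _ _ _ => eq_refl).

Definition psh_sum_is_inl {C : cat} (X Y : presheaf C) : nattrans (psh_sum X Y) (psh_bool C).
Proof.
  refine (NatTrans C (psh_sum X Y) (psh_bool C)
            (fun V s => match s with inl _ => true | inr _ => false end) _).
  intros U V f [x|y]; reflexivity.
Defined.

Definition nt_true {C : cat} (X : presheaf C) : nattrans X (psh_bool C) :=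
  NatTrans C X (psh_bool C) (fun _ _ => true) (fun _ _ _ _ => eq_refl).

Definition left_of {A B : Type} (s : (A + B)%type) (h : exists a, s = inl a) : A.
Proof. destruct s as [a|b]; [exact a|]. exfalso. destruct h as [a e]. discriminate. Defined.

Lemma left_of_spec {A B : Type} (s : (A + B)%type) h : s = inl (left_of s h).
Proof. destruct s; simpl; [reflexivity|]. exfalso. destruct h; discriminate. Qed.

(* A cocone given only on the indices [i <= plen p] still factors through the
   colimit.  Since [W] may have no elements to extend it with, it is extended
   into [W + X] by [iota] itself, and the factorization is shown to land in [W]
   by comparing its [W]-indicator with the constant [true]. *)
Lemma track_colimit_extend {C : dcat} (p : path C) (X : presheaf C) iota :
  is_track_colimit p X iota ->
  forall (W : presheaf C) (tau : forall i, i <= plen p -> nattrans (repr C (po p i)) W),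
  (forall i j (r : reach (pw p) i j) hi hj U g,
      tau j hj U (comp (ph p r) g) = tau i hi U g) ->
  exists u : nattrans X W, forall i (hi : i <= plen p) U g, u U (iota i U g) = tau i hi U g.
Proof.
  intros H W tau htau. pose proof H as [hc hu].
  set (tau' := fun i => match le_dec i (plen p) with
                        | left h => nt_comp (psh_sum_inl W X) (tau i h)
                        | right _ => nt_comp (psh_sum_inr W X) (iota i) end).
  destruct (hu (psh_sum W X) tau') as [[u' hu'] _].
  { intros i j r U g. pose proof r as [hi [hj _]]. unfold tau'.
    destruct (le_dec i (plen p)), (le_dec j (plen p)); try (unfold plen in *; lia).
    simpl. rewrite htau with (hi := l). reflexivity. }
  assert (u'_inl : forall U x, exists w, u' U x = inl w).
  { intros U x.
    assert (hb : nt_comp (psh_sum_is_inl W X) u' U x = nt_true X U x).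
    { apply (track_colimit_ext p X iota H). intros i hi V g; simpl. rewrite hu' by exact hi.
      unfold tau'. destruct (le_dec i (plen p)); [reflexivity|lia]. }
    simpl in hb. destruct (u' U x) as [w|y]; [eauto|discriminate]. }
  unshelve eexists (NatTrans C X W (fun U x => left_of (u' U x) (u'_inl U x)) _).
  - intros U V f x; simpl.
    assert (E : inl (left_of (u' U (pact X f x)) (u'_inl U (pact X f x))) =
                inl (B := X U) (pact W f (left_of (u' V x) (u'_inl V x)))).
    { rewrite <- left_of_spec, (nt_nat C _ _ u').
      rewrite (left_of_spec (u' V x) (u'_inl V x)) at 1. reflexivity. }
    injection E; auto.
  - intros i hi U g; simpl.
    assert (E : inl (left_of (u' U (iota i U g)) (u'_inl U (iota i U g))) =
                inl (B := X U) (tau i hi U g)).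
    { rewrite <- left_of_spec, hu' by exact hi. unfold tau'.
      destruct (le_dec i (plen p)); [|lia]. simpl. rewrite (proof_irrelevance _ l hi).
      reflexivity. }
    injection E; auto.
Qed.

Section PathCatCocone.
Variables (C : dcat) (p q : path C) (e : po p (plen p) = po q 0) (W : presheaf C).
Variable tau : forall i, nattrans (repr C (path_cat_ob C p q i)) W.
Hypothesis tau_cocone : path_cocone (path_cat C p q e) tau.

Lemma path_cat_cocone_prefix i j (r : reach (pw p) i j) (hi : i <= plen p) (hj : j <= plen p)
  U g :
  nt_precomp (cast_hom (eq_sym (path_cat_ob_l C p q j hj))) (tau j) U (comp (ph p r) g) =
  nt_precomp (cast_hom (eq_sym (path_cat_ob_l C p q i hi))) (tau i) U g.
Proof.
  pose proof tau_cocone as htau; unfold path_cocone in htau; simpl in htau.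
  unfold nt_precomp; simpl. rewrite <- (htau i j (reach_app_prefix _ _ _ _ r) U
                       (comp (cast_hom (eq_sym (path_cat_ob_l C p q i hi))) g)).
  f_equal; simpl. unfold path_cat_hom.
  destruct (le_dec i (plen p)), (le_dec j (plen p)); try lia.
  hom_norm. congr_irrelevance.
Qed.

Lemma path_cat_cocone_suffix i j (r : reach (pw q) i j) U g :
  nt_precomp (cast_hom (path_cat_ob_shift C p q e j)) (tau (j + plen p)) U (comp (ph q r) g) =
  nt_precomp (cast_hom (path_cat_ob_shift C p q e i)) (tau (i + plen p)) U g.
Proof.
  pose proof tau_cocone as htau; unfold path_cocone in htau; simpl in htau.
  unfold nt_precomp; simpl. rewrite <- (htau (i + plen p) (j + plen p) (reach_app_suffix _ _ _ _ r) U
                       (comp (cast_hom (path_cat_ob_shift C p q e i)) g)).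
  f_equal; simpl. unfold path_cat_hom.
  destruct (le_dec (i + plen p) (plen p)), (le_dec (j + plen p) (plen p));
    try (assert (i = 0) by lia; subst i); try (assert (j = 0) by lia; subst j);
    try (match goal with |- context [@ph _ q ?i' ?j' ?r'] =>
           tryif constr_eq r' r then fail else
           rewrite (ph_reindex q _ _ i' j' r r' ltac:(unfold plen in *; lia)
                      ltac:(unfold plen in *; lia)) end);
    hom_norm; congr_irrelevance.
Qed.

End PathCatCocone.

Section ConcatTrack.
Variables (C : dcat) (p q : path C) (e : po p (plen p) = po q 0) (X Y Z : presheaf C).
Variables (P : nattrans X Z) (Q : nattrans Y Z).
Variables (iota : forall i, nattrans (repr C (po p i)) X)
          (kappa : forall i, nattrans (repr C (po q i)) Y).
Hypothesis colX : is_track_colimit p X iota.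
Hypothesis colY : is_track_colimit q Y kappa.

Let a := iota (plen p) (po p (plen p)) (idm _).
Let b := pact Y (cast_hom e) (kappa 0 (po q 0) (idm _)).
Hypothesis glue : coglue a b P Q.
Hypothesis univ : pushout_univ a b P Q.

Definition path_cat_cocone i : nattrans (repr C (path_cat_ob C p q i)) Z :=
  match le_dec i (plen p) with
  | left hi => nt_comp P (nt_precomp (cast_hom (path_cat_ob_l C p q i hi)) (iota i))
  | right hi => nt_comp Q (nt_precomp (cast_hom (path_cat_ob_r C p q i hi)) (kappa (i - plen p)))
  end.

Lemma glue_junction V (h : Hom V (po p (plen p))) :
  Q V (kappa 0 V (comp (cast_hom e) h)) = P V (iota (plen p) V h).
Proof.
  pose proof (glue V h) as g0. unfold a, b in g0.
  rewrite yoneda_act, comp_id_l, <- pact_comp, yoneda_act, comp_id_l in g0.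
  symmetry; exact g0.
Qed.

Lemma path_cat_cocone_compat : path_cocone (path_cat C p q e) path_cat_cocone.
Proof.
  destruct colX as [hcX _], colY as [hcY _].
  intros i j r U g. simpl. unfold path_cat_cocone, path_cat_hom.
  destruct (le_dec i (plen p)), (le_dec j (plen p)); simpl; hom_norm.
  - rewrite hcX. congr_irrelevance.
  - rewrite hcY, glue_junction, hcX. congr_irrelevance.
  - rewrite hcX, <- glue_junction. hom_norm. rewrite hcY. congr_irrelevance.
  - rewrite hcY. congr_irrelevance.
Qed.

Lemma P_path_cat_cocone i (hi : i <= plen p) V h :
  P V (iota i V h) = path_cat_cocone i V (comp (cast_hom (eq_sym (path_cat_ob_l C p q i hi))) h).
Proof.
  unfold path_cat_cocone. destruct (le_dec i (plen p)); [|lia]. simpl. hom_norm. reflexivity.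
Qed.

Lemma Q_path_cat_cocone i V h : 0 < i ->
  Q V (kappa i V h) =
  path_cat_cocone (i + plen p) V (comp (cast_hom (path_cat_ob_shift C p q e i)) h).
Proof.
  intro hi. unfold path_cat_cocone. destruct (le_dec (i + plen p) (plen p)); [lia|]. simpl.
  rewrite (nt_family_reindex (po q) Y kappa i (i + plen p - plen p) ltac:(lia)).
  hom_norm. reflexivity.
Qed.

Lemma path_cat_cocone_factor (W : presheaf C) tau :
  path_cocone (path_cat C p q e) tau ->
  exists u : nattrans Z W, forall i, i <= plen (path_cat C p q e) ->
    forall U g, u U (path_cat_cocone i U g) = tau i U g.
Proof.
  intro htau.
  destruct (track_colimit_extend p X iota colX W
              (fun i hi => nt_precomp (cast_hom (eq_sym (path_cat_ob_l C p q i hi))) (tau i))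
              (path_cat_cocone_prefix C p q e W tau htau)) as [uX huX].
  destruct (track_colimit_extend q Y kappa colY W
              (fun i _ => nt_precomp (cast_hom (path_cat_ob_shift C p q e i)) (tau (i + plen p)))
              (fun i j r _ _ => path_cat_cocone_suffix C p q e W tau htau i j r)) as [uY huY].
  destruct (univ W uX uY) as [[u [hu1 hu2]] _].
  { intros V g. unfold a, b. rewrite yoneda_act, <- pact_comp, yoneda_act.
    rewrite (huX (plen p) (le_n _)), (huY 0 (Nat.le_0_l _)). simpl. hom_norm.
    congr_irrelevance. }
  exists u. intros i hi V g. rewrite plen_path_cat in hi.
  unfold path_cat_cocone. destruct (le_dec i (plen p)) as [l|n]; simpl.
  - rewrite hu1, (huX i l); simpl. hom_norm. reflexivity.
  - rewrite hu2, (huY (i - plen p) ltac:(lia)); simpl.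
    rewrite (nt_family_reindex (path_cat_ob C p q) W tau i (i - plen p + plen p) ltac:(lia)).
    hom_norm. reflexivity.
Qed.

Lemma path_cat_cocone_unique (W : presheaf C) (u1 u2 : nattrans Z W) :
  (forall i, i <= plen (path_cat C p q e) ->
     forall U g, u1 U (path_cat_cocone i U g) = u2 U (path_cat_cocone i U g)) ->
  forall V z, u1 V z = u2 V z.
Proof.
  intros h. rewrite plen_path_cat in h.
  assert (hP : forall V x, u1 V (P V x) = u2 V (P V x)).
  { apply (track_colimit_ext p X iota colX W (nt_comp u1 P) (nt_comp u2 P)).
    intros i hi V h0; simpl. rewrite (P_path_cat_cocone i hi). apply h. lia. }
  assert (hQ : forall V y, u1 V (Q V y) = u2 V (Q V y)).
  { apply (track_colimit_ext q Y kappa colY W (nt_comp u1 Q) (nt_comp u2 Q)).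
    intros [|i] hi V h0; simpl.
    - replace h0 with (comp (cast_hom e) (comp (cast_hom (eq_sym e)) h0)) by
        (hom_norm; reflexivity).
      rewrite glue_junction. apply hP.
    - rewrite (Q_path_cat_cocone (S i) V h0 ltac:(lia)). apply h. lia. }
  destruct (univ W (nt_comp u1 P) (nt_comp u1 Q)) as [_ huniq].
  { intros V g; simpl. rewrite glue. reflexivity. }
  apply huniq; intros; simpl; auto.
Qed.

Lemma path_cat_track_colimit : is_track_colimit (path_cat C p q e) Z path_cat_cocone.
Proof.
  split; [apply path_cat_cocone_compat|].
  intros W tau htau. split; [exact (path_cat_cocone_factor W tau htau)|].
  intros u1 u2 h1 h2. apply path_cat_cocone_unique.
  intros i hi U g. transitivity (tau i U g); [apply h1|symmetry; apply h2]; exact hi.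
Qed.

Lemma path_cat_cocone_start :
  existT (fun V => Z V) (path_cat_ob C p q 0) (path_cat_cocone 0 _ (idm _)) =
  existT (fun V => Z V) (po p 0) (P _ (iota 0 _ (idm _))).
Proof.
  unfold path_cat_cocone. destruct (le_dec 0 (plen p)); [|lia].
  apply (existT_yoneda Z (nt_comp P (iota 0)) (path_cat_ob_l C p q 0 l)).
Qed.

Lemma path_cat_cocone_end :
  existT (fun V => Z V) (path_cat_ob C p q (plen (path_cat C p q e)))
    (path_cat_cocone (plen (path_cat C p q e)) _ (idm _)) =
  existT (fun V => Z V) (po q (plen q)) (Q _ (kappa (plen q) _ (idm _))).
Proof.
  rewrite plen_path_cat. destruct (Nat.eq_dec (plen q) 0) as [q0|q0].
  - rewrite (nt_family_existT (path_cat_ob C p q) Z path_cat_cocone (plen p) (plen p + plen q)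
               ltac:(lia)).
    transitivity (existT (fun V => Z V) (po p (plen p)) (P _ (iota (plen p) _ (idm _)))).
    { unfold path_cat_cocone. destruct (le_dec (plen p) (plen p)); [|lia].
      apply (existT_yoneda Z (nt_comp P (iota (plen p))) (path_cat_ob_l C p q _ l)). }
    transitivity (existT (fun V => Z V) (po q 0) (Q _ (kappa 0 _ (idm _)))).
    { rewrite <- glue_junction. apply (existT_yoneda Z (nt_comp Q (kappa 0)) e). }
    symmetry; apply (nt_family_existT (po q) Z (fun i => nt_comp Q (kappa i)) 0 (plen q) q0).
  - rewrite (nt_family_existT (path_cat_ob C p q) Z path_cat_cocone (plen q + plen p)
               (plen p + plen q) ltac:(lia)).
    transitivity (existT (fun V => Z V) (po q (plen q + plen p - plen p))
                    (Q _ (kappa (plen q + plen p - plen p) _ (idm _)))).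
    { unfold path_cat_cocone. destruct (le_dec (plen q + plen p) (plen p)); [lia|].
      apply (existT_yoneda Z (nt_comp Q (kappa _)) (path_cat_ob_r C p q _ n)). }
    apply (nt_family_existT (po q) Z (fun i => nt_comp Q (kappa i)) (plen q)
             (plen q + plen p - plen p) ltac:(lia)).
Qed.

End ConcatTrack.

Lemma concat_track {C : dcat} (X Y Z : automaton C) :
  is_track X -> is_track Y -> is_concat X Y Z -> is_track Z.
Proof.
  intros [p [iota [colX [stX acX]]]] [q [kappa [colY [stY acY]]]]
         [_ [_ [U [a [b [ha [hb [P [Q [glue [univ [stZ acZ]]]]]]]]]]]].
  apply acX in ha. invert_existT ha.
  apply stY, existT_cast in hb. destruct hb as [e ->].
  exists (path_cat C p q e), (path_cat_cocone C p q X Y Z P Q iota kappa).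
  split; [apply path_cat_track_colimit; assumption|]. split; intro s.
  - rewrite stZ. split.
    + intros [V [x [hx ->]]]. apply stX in hx. invert_existT hx.
      symmetry; apply path_cat_cocone_start.
    + intros ->. exists (po p 0), (iota 0 _ (idm _)).
      split; [apply stX; reflexivity|apply path_cat_cocone_start].
  - rewrite acZ. split.
    + intros [V [y [hy ->]]]. apply acY in hy. invert_existT hy.
      symmetry; apply path_cat_cocone_end; assumption.
    + intros ->. exists (po q (plen q)), (kappa (plen q) _ (idm _)).
      split; [apply acY; reflexivity|apply path_cat_cocone_end; assumption].
Qed.

Definition trivial_path {C : dcat} (U : Ob C) : path C.
Proof.
  refine (Path C nil (fun _ => U) (fun i j r => idm U) _ _ _ _).
  - reflexivity.
  - intros; simpl; rewrite comp_id_l; reflexivity.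
  - intros; apply isF_id.
  - intros; apply isB_id.
Defined.

Lemma iota_track {C : dcat} (U : Ob C) : is_track (@iota_aut C U).
Proof.
  exists (trivial_path U), (fun i => nt_id (repr C U)).
  split; [split|split; intro s; simpl; tauto].
  - intros i j r V g; simpl. apply comp_id_l.
  - intros W tau htau. split.
    + exists (tau 0). intros i hi V g. unfold plen in hi; simpl in hi.
      replace i with 0 by lia. reflexivity.
    + intros u1 u2 h1 h2 V x. exact (eq_trans (h1 0 (le_n _) V x) (eq_sym (h2 0 (le_n _) V x))).
Qed.

Lemma sqsub_concat_iota {C : dcat} (X Z : automaton C) (U : Ob C) :
  is_concat X (iota_aut U) Z -> sqsub X Z.
Proof.
  intros [sX [_ [U' [a [b [ha [hb [P [Q [glue [_ [hst hac]]]]]]]]]]]].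
  simpl in hb. invert_existT hb.
  constructor. refine (AutMor C X Z P _ _).
  - intros V x hx. apply hst. exists V, x. auto.
  - intros V x hx. pose proof (simple_acc_unique _ _ _ sX hx ha) as ex. invert_existT ex.
    apply hac. exists _, (idm _). split; [reflexivity|]. f_equal.
    pose proof (glue _ (idm _)) as g; rewrite !pact_id in g. exact g.
Qed.

Lemma lmul_lone_r {C : dcat} (L : lang C) : is_language L -> leqv (lmul L (lone C)) L.
Proof.
  intros [hL1 hL2] X. split.
  - intros [hX [Z [[G [D [hG [[_ [Z0 [[U0 ->] hD0]]] hc]]]] hXZ]]].
    apply (hL2 X G hX); [|exact hG].
    eapply sqsub_trans; [exact hXZ|]. eapply concat_iota_sqsub; eauto.
  - intro hXL. pose proof (hL1 X hXL) as hX. pose proof (track_simple X hX) as sX.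
    destruct sX as [sXs [[U a] hXa]].
    destruct (concat_exists X (iota_aut U) U a (idm U) (track_simple X hX) (iota_simple U)
                (proj2 (hXa _) eq_refl) eq_refl) as [Z HZ].
    split; [exact hX|]. exists Z. split; [|eapply sqsub_concat_iota, HZ].
    exists X, (iota_aut U). split; [exact hXL|]. split; [|exact HZ].
    split; [apply iota_track|]. exists (iota_aut U). split; [eauto|apply sqsub_refl].
Qed.

Section LanguageProduct.
Variable C : dcat.
Implicit Types L M N : lang C.

Lemma lmul_assoc_sub_r L M N : is_language L -> is_language M -> is_language N ->
  lsub (lmul (lmul L M) N) (lmul L (lmul M N)).
Proof.
  intros hL hM hN X [hX [Z [[T [K [[_ [W [[G [H [hG [hH hW]]]] [f]]]] [hK hZ]]]] hXZ]]].
  pose proof (proj1 hL G hG) as tG. pose proof (proj1 hM H hH) as tH.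
  pose proof (proj1 hN K hK) as tK.
  destruct (concat_glue_point _ _ _ hZ) as [U2 [a2 [b2 [ha2 hb2]]]].
  pose proof (am_acc C _ _ f U2 a2 ha2) as hfa.
  destruct (concat_exists W K U2 (f U2 a2) b2 (concat_simple _ _ _ hW) (track_simple _ tK)
              hfa hb2) as [Z1 HZ1].
  destruct (concat_acc_inv _ _ _ _ _ hW hfa) as [y hy].
  destruct (concat_exists H K U2 y b2 (track_simple _ tH) (track_simple _ tK) hy hb2)
    as [HK HHK].
  destruct (concat_glue_point _ _ _ hW) as [U1 [a1 [b1 [ha1 hb1]]]].
  destruct (concat_start _ _ _ _ _ HHK hb1) as [c hc].
  destruct (concat_exists G HK U1 a1 c (track_simple _ tG)
              (track_simple _ (concat_track _ _ _ tH tK HHK)) ha1 hc) as [Z' HZ'].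
  split; [exact hX|]. exists Z'. split.
  - exists G, HK. split; [exact hG|]. split; [|exact HZ'].
    split; [exact (concat_track _ _ _ tH tK HHK)|].
    exists HK. split; [exists H, K; auto|apply sqsub_refl].
  - apply (sqsub_trans _ _ _ hXZ), (sqsub_trans _ Z1).
    + apply (concat_sqsub _ _ _ _ _ _ hZ HZ1); [constructor; exact f|apply sqsub_refl].
    + exact (proj1 (concat_assoc _ _ _ _ _ _ _ hW HZ1 HHK HZ')).
Qed.

Lemma lmul_assoc_sub_l L M N : is_language L -> is_language M -> is_language N ->
  lsub (lmul L (lmul M N)) (lmul (lmul L M) N).
Proof.
  intros hL hM hN X [hX [Z [[G [D [hG [[_ [HK [[H [K [hH [hK hHK]]]] [g]]]] hZ]]]] hXZ]]].
  pose proof (proj1 hL G hG) as tG. pose proof (proj1 hM H hH) as tH.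
  pose proof (proj1 hN K hK) as tK.
  destruct (concat_glue_point _ _ _ hZ) as [U [a [b [ha hb]]]].
  pose proof (am_start C _ _ g U b hb) as hgb.
  destruct (concat_exists G HK U a (g U b) (track_simple _ tG) (concat_simple _ _ _ hHK)
              ha hgb) as [Z1 HZ1].
  destruct (concat_start_inv _ _ _ _ _ hHK hgb) as [y hy].
  destruct (concat_exists G H U a y (track_simple _ tG) (track_simple _ tH) ha hy)
    as [GH HGH].
  destruct (concat_glue_point _ _ _ hHK) as [U3 [a3 [b3 [ha3 hb3]]]].
  destruct (concat_acc _ _ _ _ _ HGH ha3) as [c hc].
  destruct (concat_exists GH K U3 c b3 (track_simple _ (concat_track _ _ _ tG tH HGH))
              (track_simple _ tK) hc hb3) as [Z' HZ'].
  split; [exact hX|]. exists Z'. split.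
  - exists GH, K. split; [|split; [exact hK|exact HZ']].
    split; [exact (concat_track _ _ _ tG tH HGH)|].
    exists GH. split; [exists G, H; auto|apply sqsub_refl].
  - apply (sqsub_trans _ _ _ hXZ), (sqsub_trans _ Z1).
    + apply (concat_sqsub _ _ _ _ _ _ hZ HZ1); [apply sqsub_refl|constructor; exact g].
    + exact (proj2 (concat_assoc _ _ _ _ _ _ _ HGH HZ' hHK HZ1)).
Qed.

Lemma lmul_assoc L M N : is_language L -> is_language M -> is_language N ->
  leqv (lmul L (lmul M N)) (lmul (lmul L M) N).
Proof.
  intros hL hM hN X. split; [apply lmul_assoc_sub_l|apply lmul_assoc_sub_r]; assumption.
Qed.

Lemma lmul_lplus_distr_l L M N : leqv (lmul L (lplus M N)) (lplus (lmul L M) (lmul L N)).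
Proof.
  intro X. unfold lmul, lplus, down. split.
  - intros [hX [Z [[G [D [hG [[hD|hD] hc]]]] hXZ]]]; [left|right];
      (split; [exact hX|]); exists Z; split; eauto; exists G, D; auto.
  - intros [[hX [Z [[G [D [hG [hD hc]]]] hXZ]]]|[hX [Z [[G [D [hG [hD hc]]]] hXZ]]]];
      (split; [exact hX|]); exists Z; split; eauto; exists G, D; auto.
Qed.

Lemma lmul_lplus_distr_r L M N : leqv (lmul (lplus L M) N) (lplus (lmul L N) (lmul M N)).
Proof.
  intro X. unfold lmul, lplus, down. split.
  - intros [hX [Z [[G [D [[hG|hG] [hD hc]]]] hXZ]]]; [left|right];
      (split; [exact hX|]); exists Z; split; eauto; exists G, D; auto.
  - intros [[hX [Z [[G [D [hG [hD hc]]]] hXZ]]]|[hX [Z [[G [D [hG [hD hc]]]] hXZ]]]];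
      (split; [exact hX|]); exists Z; split; eauto; exists G, D; auto.
Qed.

Lemma lmul_lempty_l L : leqv (lmul (lempty C) L) (lempty C).
Proof. intro X. split; [intros [_ [Z [[G [D [[] _]]] _]]]|intros []]. Qed.

Lemma lmul_lempty_r L : leqv (lmul L (lempty C)) (lempty C).
Proof. intro X. split; [intros [_ [Z [[G [D [_ [[] _]]]] _]]]|intros []]. Qed.

Lemma lpow_add L : is_language L ->
  forall n m, 1 <= n -> lsub (lmul (lpow L n) (lpow L m)) (lpow L (n + m)).
Proof.
  intros hL n. induction n as [|[|n] IH]; intros m hn; [lia| |].
  - apply lmul_mono; [intro X; apply (lmul_lone_r L hL X)|intros X h; exact h].
  - intros X h. change (lpow L (S (S n))) with (lmul L (lpow L (S n))) in h.
    apply lmul_assoc_sub_r in h; [|exact hL|apply lpow_is_language..].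
    revert X h. apply lmul_mono; [intros X h; exact h|]. apply IH; lia.
Qed.

Lemma lplusstar_closed L : is_language L ->
  lsub (lplus L (lmul (lplusstar L) (lplusstar L))) (lplusstar L).
Proof.
  intros hL X [h|[hX [Z [[G [D [[n [hn hG]] [[m [hm hD]] hc]]]] hXZ]]]].
  - exists 1. split; [lia|]. apply (lmul_lone_r L hL X), h.
  - exists (n + m). split; [lia|]. apply lpow_add; [exact hL|exact hn|].
    split; [exact hX|]. exists Z. split; [|exact hXZ]. exists G, D. auto.
Qed.

Lemma lplusstar_least L M : is_language L ->
  lsub (lplus L (lmul M M)) M -> lsub (lplusstar L) M.
Proof.
  intros hL hsub X [n [hn h]]. revert X h.
  induction n as [|[|n] IH]; [lia| |]; intros X h.
  - apply hsub. left. apply (lmul_lone_r L hL X), h.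
  - apply hsub. right. revert X h. apply lmul_mono.
    + intros Y h. apply hsub. left. exact h.
    + intros Y hY. apply IH; [lia|exact hY].
Qed.

End LanguageProduct.

Theorem proposition10 (C : dcat) :
  Rat (@lempty C) /\
  (forall L M : lang C, Rat L -> Rat M -> Rat (lplus L M)) /\
  (forall L M : lang C, Rat L -> Rat M -> Rat (lmul L M)) /\
  (forall L : lang C, Rat L -> Rat (lplusstar L)) /\
  (forall L M N : lang C, Rat L -> Rat M -> Rat N ->
      leqv (lplus L (lplus M N)) (lplus (lplus L M) N)) /\
  (forall L M : lang C, Rat L -> Rat M -> leqv (lplus L M) (lplus M L)) /\
  (forall L : lang C, Rat L -> leqv (lplus L L) L) /\
  (forall L : lang C, Rat L -> leqv (lplus (@lempty C) L) L) /\
  (forall L : lang C, Rat L -> leqv (lplus L (@lempty C)) L) /\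
  (forall L M N : lang C, Rat L -> Rat M -> Rat N ->
      leqv (lmul L (lmul M N)) (lmul (lmul L M) N)) /\
  (forall L M N : lang C, Rat L -> Rat M -> Rat N ->
      leqv (lmul L (lplus M N)) (lplus (lmul L M) (lmul L N))) /\
  (forall L M N : lang C, Rat L -> Rat M -> Rat N ->
      leqv (lmul (lplus L M) N) (lplus (lmul L N) (lmul M N))) /\
  (forall L : lang C, Rat L -> leqv (lmul (@lempty C) L) (@lempty C)) /\
  (forall L : lang C, Rat L -> leqv (lmul L (@lempty C)) (@lempty C)) /\
  (forall L : lang C, Rat L ->
      lsub (lplus L (lmul (lplusstar L) (lplusstar L))) (lplusstar L)) /\
  (forall L M : lang C, Rat L -> Rat M ->
      lsub (lplus L (lmul M M)) M -> lsub (lplusstar L) M).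
Proof.
  refine (conj Rat_empty (conj Rat_plus (conj Rat_mul (conj Rat_plusstar _)))).
  repeat match goal with |- _ /\ _ => split end; intros.
  1-5: intro; unfold lplus, lempty; tauto.
  - apply lmul_assoc; apply Rat_is_language; assumption.
  - apply lmul_lplus_distr_l.
  - apply lmul_lplus_distr_r.
  - apply lmul_lempty_l.
  - apply lmul_lempty_r.
  - apply lplusstar_closed, Rat_is_language; assumption.
  - eapply lplusstar_least; [apply Rat_is_language|]; eassumption.
Qed.
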